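(* Let $U$ be a finite set of black vertices of $\frac1n\Lambda$, let $\bar U=U\cup\{u-\frac1ne_i+\frac1ne_j:u\in U,\ 1\le i,j\le D\}$ and $\partial U=\bar U\setminus U$. Let $q,q_+,q_-:\bar U\to(0,\infty)$ satisfy, for all $u\in U$, $\mathcal C_n(q)(u)=1$, $\mathcal C_n(q_+)(u)>1$ and $\mathcal C_n(q_-)(u)<1$, where $$\mathcal C_n(q)(u)=q(u)\sum_{i=1}^D\Big(\sum_{j=1}^Dq\big(u-\tfrac1ne_i+\tfrac1ne_j\big)\Big)^{-1}.$$ Then $\min_{\bar U}q/q_-=\min_{\partial U}q/q_-$ and $\max_{\bar U}q/q_+=\max_{\partial U}q/q_+$.
   Context: $\Lambda$ is a bipartite lattice in $\mathbb R^d$: vectors $e_1,\dots,e_D$ spanning $\mathbb R^d$ with $\sum e_i=0$ and $e_i\in v_0+\mathbb Z^d$; white vertices $\mathbb Z^d$, black vertices $\mathbb Z^d+v_0$, each white vertex $w$ joined to $w+e_1,\dots,w+e_D$ (so each black vertex $u$ is joined to $u-e_1,\dots,u-e_D$). *)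

From HB Require Import structures.
From mathcomp Require Import all_boot all_order all_algebra.
From mathcomp Require Import reals.
Set Implicit Arguments. Unset Strict Implicit. Unset Printing Implicit Defensive.
Import Order.TTheory GRing.Theory Num.Theory.
Local Open Scope ring_scope.

Definition is_int_vec (R : realType) (d : nat) (x : 'rV[R]_d) : Prop :=
  forall k : 'I_d, x ord0 k \is a Num.int.

Definition bipartite_lattice (R : realType) (d D : nat)
    (e : 'I_D -> 'rV[R]_d) (v0 : 'rV[R]_d) : Prop :=
  [/\ row_full (\matrix_(i < D) e i),
      \sum_(i < D) e i = 0
    & forall i, is_int_vec (e i - v0)].

(* u is a black vertex of (1/n) Lambda, i.e. u in (1/n)(Z^d + v0). *)
Definition black_vertex (R : realType) (d : nat) (v0 : 'rV[R]_d) (n : nat)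
    (u : 'rV[R]_d) : Prop :=
  is_int_vec (n%:R *: u - v0).

Definition nbr (R : realType) (d D : nat) (e : 'I_D -> 'rV[R]_d) (n : nat)
    (u : 'rV[R]_d) (i j : 'I_D) : 'rV[R]_d :=
  u - n%:R^-1 *: e i + n%:R^-1 *: e j.

Definition in_Ubar (R : realType) (d D : nat) (e : 'I_D -> 'rV[R]_d) (n : nat)
    (U : seq 'rV[R]_d) (x : 'rV[R]_d) : Prop :=
  x \in U \/ exists u i j, u \in U /\ x = nbr e n u i j.

Definition in_bdry (R : realType) (d D : nat) (e : 'I_D -> 'rV[R]_d) (n : nat)
    (U : seq 'rV[R]_d) (x : 'rV[R]_d) : Prop :=
  in_Ubar e n U x /\ x \notin U.

Definition Cn (R : realType) (d D : nat) (e : 'I_D -> 'rV[R]_d) (n : nat)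
    (q : 'rV[R]_d -> R) (u : 'rV[R]_d) : R :=
  q u * \sum_(i < D) (\sum_(j < D) q (nbr e n u i j))^-1.

From HB Require Import structures.
From mathcomp Require Import all_boot all_order all_algebra.
From mathcomp Require Import reals.
Import Order.TTheory GRing.Theory Num.Theory.
Local Open Scope ring_scope.

Set Implicit Arguments.
Unset Strict Implicit.

(* A discrete maximum principle.  [C_n] is invariant under scaling and
   monotone: raising [q] at the neighbours of [u] while keeping [q u] lowers
   [C_n(q)(u)].  So if [q/q_-] had an interior minimum [m] at [u], comparing
   [q] with [m q_-] would give [1 = C_n(q)(u) <= C_n(m q_-)(u) = C_n(q_-)(u) < 1];
   symmetrically an interior maximum of [q/q_+] contradicts [C_n(q_+) > 1].
   Since [Ubar] is finite, the extrema exist and must lie on the boundary. *)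

Lemma seq_argmin (T : eqType) (disp : Order.disp_t) (O : orderType disp)
    (f : T -> O) (s : seq T) x :
  x \in s -> exists2 y, y \in s & forall z, z \in s -> (f y <= f z)%O.
Proof.
elim: s x => [|a s IH] x //= _.
have [s0 | [b bs]] : s = [::] \/ exists b, b \in s.
- by case: s {IH} => [|b s]; [left | right; exists b; rewrite mem_head].
- by exists a; rewrite ?mem_head // s0 => z; rewrite inE => /eqP ->.
have [y ys ymin] := IH b bs.
have [ay | ya] := leP (f a) (f y).
- exists a; first by rewrite mem_head.
  by move=> z; rewrite inE => /predU1P [-> // | /ymin]; apply: le_trans.
- exists y; first by rewrite inE ys orbT.
  by move=> z; rewrite inE => /predU1P [-> | /ymin //]; apply: ltW.
Qed.

Section CnComparison.
Variables (R : realType) (d D : nat) (e : 'I_D -> 'rV[R]_d) (n : nat).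

Lemma CnZ (c : R) (q : 'rV[R]_d -> R) u :
  c != 0 -> Cn e n (fun x => c * q x) u = Cn e n q u.
Proof.
move=> c0; rewrite /Cn [c * _]mulrC -mulrA; congr (_ * _).
rewrite mulr_sumr; apply: eq_bigr => i _.
by rewrite -mulr_sumr invfM mulrA mulfV ?mul1r.
Qed.

Lemma Cn_le_nbr (q p : 'rV[R]_d -> R) u :
  q u = p u -> 0 <= p u -> (forall i j, 0 < p (nbr e n u i j)) ->
  (forall i j, p (nbr e n u i j) <= q (nbr e n u i j)) ->
  Cn e n q u <= Cn e n p u.
Proof.
move=> qu_eq pu_ge0 p_gt0 le_pq; rewrite /Cn qu_eq ler_wpM2l //.
apply: ler_sum => i _.
have sum_p_gt0 : 0 < \sum_(j < D) p (nbr e n u i j).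
  rewrite (bigD1 i) //= ltr_pwDl // sumr_ge0 // => j _; exact: ltW.
have sum_le : \sum_(j < D) p (nbr e n u i j) <= \sum_(j < D) q (nbr e n u i j).
  by apply: ler_sum => j _; apply: le_pq.
by rewrite lef_pV2 ?posrE // (lt_le_trans sum_p_gt0).
Qed.

Lemma Cn_le_at_ratio_min (q p : 'rV[R]_d -> R) u :
  0 < q u -> 0 < p u -> (forall i j, 0 < p (nbr e n u i j)) ->
  (forall i j, q u / p u <= q (nbr e n u i j) / p (nbr e n u i j)) ->
  Cn e n q u <= Cn e n p u.
Proof.
move=> qu_gt0 pu_gt0 p_gt0 ratio_min; set m := q u / p u.
have m_gt0 : 0 < m by rewrite divr_gt0.
rewrite -(@CnZ m p u (lt0r_neq0 m_gt0)); apply: Cn_le_nbr.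
- by rewrite /m divfK ?gt_eqF.
- by rewrite mulr_ge0 ?ltW.
- by move=> i j; rewrite mulr_gt0.
- by move=> i j; rewrite -ler_pdivlMr.
Qed.

End CnComparison.

Section MinimumPrinciple.
Variables (R : realType) (d D : nat) (e : 'I_D -> 'rV[R]_d) (n : nat).
Variable U : seq 'rV[R]_d.

Definition Ubar_seq : seq 'rV[R]_d :=
  U ++ [seq nbr e n u ij.1 ij.2 | u <- U, ij <- enum {: 'I_D * 'I_D}].

Lemma in_UbarP x : in_Ubar e n U x <-> x \in Ubar_seq.
Proof.
rewrite mem_cat; split.
- case=> [-> // | [u [i [j [uU ->]]]]]; apply/orP; right.
  by apply/allpairsP; exists (u, (i, j)); rewrite mem_enum.
- case/orP=> [xU | /allpairsP [[u [i j]] [/= uU _ ->]]]; first by left.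
  by right; exists u, i, j.
Qed.

Lemma in_Ubar_nbr u i j : u \in U -> in_Ubar e n U (nbr e n u i j).
Proof. by move=> uU; right; exists u, i, j. Qed.

Lemma bdry_minimum (disp : Order.disp_t) (O : orderType disp)
    (f : 'rV[R]_d -> O) :
  (forall u, u \in U -> ~ forall i j, (f u <= f (nbr e n u i j))%O) ->
  forall x, in_Ubar e n U x ->
    exists2 y, in_bdry e n U y & (f y <= f x)%O.
Proof.
move=> no_interior_min x /in_UbarP xUbar.
have [y /in_UbarP yUbar ymin] := seq_argmin f xUbar.
exists y; last exact: ymin.
split=> //; apply/negP => yU; apply: (no_interior_min y yU) => i j.
exact/ymin/in_UbarP/in_Ubar_nbr.
Qed.

End MinimumPrinciple.

Unset Implicit Arguments.

Theorem mainTheorem17 (R : realType) (d D : nat) (e : 'I_D -> 'rV[R]_d)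
    (v0 : 'rV[R]_d) (n : nat) (U : seq 'rV[R]_d)
    (q qp qm : 'rV[R]_d -> R) :
  bipartite_lattice e v0 ->
  (0 < n)%N ->
  (forall u, u \in U -> black_vertex v0 n u) ->
  (forall x, in_Ubar e n U x -> [/\ 0 < q x, 0 < qp x & 0 < qm x]) ->
  (forall u, u \in U -> Cn e n q u = 1) ->
  (forall u, u \in U -> Cn e n qp u > 1) ->
  (forall u, u \in U -> Cn e n qm u < 1) ->
  (* min_{Ubar} q/qm = min_{∂U} q/qm *)
  (forall x, in_Ubar e n U x ->
     exists2 y, in_bdry e n U y & q y / qm y <= q x / qm x) /\
  (* max_{Ubar} q/qp = max_{∂U} q/qp *)
  (forall x, in_Ubar e n U x ->
     exists2 y, in_bdry e n U y & q x / qp x <= q y / qp y).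
Proof.
move=> _ _ _ pos Cq1 Cqp_gt1 Cqm_lt1.
have posU u : u \in U -> [/\ 0 < q u, 0 < qp u & 0 < qm u].
  by move=> uU; apply: pos; left.
have posN u i j : u \in U ->
    [/\ 0 < q (nbr e n u i j), 0 < qp (nbr e n u i j) & 0 < qm (nbr e n u i j)].
  by move=> uU; apply/pos/in_Ubar_nbr.
split.
- apply: bdry_minimum => u uU ratio_min.
  have [qu_gt0 _ qmu_gt0] := posU u uU.
  suff : Cn e n q u <= Cn e n qm u by rewrite Cq1 // leNgt Cqm_lt1.
  by apply: Cn_le_at_ratio_min => // i j; have [] := posN u i j uU.
- (* in the dual order [R^d] a minimum of [q/qp] is a maximum *)
  apply: (@bdry_minimum _ _ _ _ _ _ _ R^d) => u uU ratio_max.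
  have [qu_gt0 qpu_gt0 _] := posU u uU.
  suff : Cn e n qp u <= Cn e n q u by rewrite Cq1 // leNgt Cqp_gt1.
  apply: Cn_le_at_ratio_min => // [i j | i j]; first by have [] := posN u i j uU.
  have [qv_gt0 qpv_gt0 _] := posN u i j uU.
  rewrite -(invf_div (q u)) -(invf_div (q _)) lef_pV2 ?posrE ?divr_gt0 //.
  by have := ratio_max i j; rewrite leEdual.
Qed.
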